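(* For every $\mathcal{ALC}$-formula $\varphi$, $\varphi\equiv\varphi^\dagger$, where $$\varphi^\dagger=\bigvee_{(T,o,f)\in\mathrm{QM}(\varphi)}\Big(\bigwedge_{\alpha\in f}\alpha\ \wedge\bigwedge_{\neg\alpha\in f}\neg\alpha\Big),$$ with $\alpha$ ranging over atomic formulae (of the form $(C=\top)$, $C(a)$, $r(a,b)$).
   Context: $\mathcal{ALC}$ concepts: $C::=A\mid\neg C\mid(C\sqcap C)\mid\exists r.C$ ($A$ concept name, $r$ role name). $\mathcal{ALC}$-formulae: $\phi::=\alpha\mid\neg\phi\mid(\phi\wedge\phi)$, atomic $\alpha::=C(a)\mid r(a,b)\mid(C=\top)$ ($a,b$ individual names); $\neg\neg\psi$ is identified with $\psi$; an empty disjunction is $\bot$. Interpretations $I=(\Delta^I,\cdot^I)$ with countable nonempty domain and standard semantics ($I\models(C=\top)$ iff $C^I=\Delta^I$, etc.); $\varphi\equiv\psi$ means both have the same models. $\mathrm{Sub}(\alpha)=\mathrm{Sub}(\neg\alpha)=\{\alpha,\neg\alpha\}$ for atomic $\alpha$; $\mathrm{Sub}(\psi\wedge\psi')=\mathrm{Sub}(\neg(\psi\wedge\psi'))=\{\psi\wedge\psi',\neg(\psi\wedge\psi')\}\cup\mathrm{Sub}(\psi)\cup\mathrm{Sub}(\psi')$. $\mathrm{con}(\varphi)$ is the smallest set of concepts containing $C$ whenever $(C=\top)\in\mathrm{Sub}(\varphi)$ or $C(a)\in\mathrm{Sub}(\varphi)$, containing $C,D$ when it contains $C\sqcap D$, containing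 $C$ when it contains $\exists r.C$, and closed under single negation. $\mathrm{ind}(\varphi)$: individual names in $\varphi$. Concept type for $\varphi$: $c\subseteq\mathrm{con}(\varphi)$ with $D\in c$ iff $\neg D\notin c$ ($D\in\mathrm{con}(\varphi)$) and $D\sqcap E\in c$ iff $\{D,E\}\subseteq c$ ($D\sqcap E\in\mathrm{con}(\varphi)$). Formula type for $\varphi$: $f\subseteq\mathrm{Sub}(\varphi)$ with $\psi\in f$ iff $\neg\psi\notin f$ ($\psi\in\mathrm{Sub}(\varphi)$) and $\psi\wedge\psi'\in f$ iff $\{\psi,\psi'\}\subseteq f$. Model candidate: $(T,o,f)$, $T$ a set of concept types, $o:\mathrm{ind}(\varphi)\to T$, $f$ a formula type, with $\varphi\in f$; $C(a)\in f\Rightarrow C\in o(a)$; $r(a,b)\in f\Rightarrow\{\neg C\mid\neg\exists r.C\in o(a)\}\subseteq o(b)$. Quasimodel for $\varphi$: a model candidate such that for every $c\in T$ and $\exists r.D\in c$ some $c'\in T$ contains $\{D\}\cup\{\neg E\mid\neg\exists r.E\in c\}$; for every $c\in T$ and concept $C$, $\neg C\in c$ implies $(C=\top)\notin f$; for every concept $C$, $\neg(C=\top)\in f$ implies some $c\in T$ has $C\notin c$; $T\neq\emptyset$. $\mathrm{QM}(\varphi)$ is the set of all quasimodels for $\varphi$. *)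

From Stdlib Require Import List Bool Classical ClassicalEpsilon.
Import ListNotations.

Inductive concept : Type :=
| CName : nat -> concept
| CNot  : concept -> concept
| CAnd  : concept -> concept -> concept
| CEx   : nat -> concept -> concept.

Inductive formula : Type :=
| FCA  : concept -> nat -> formula          (* C(a) *)
| FRole : nat -> nat -> nat -> formula      (* r(a,b) *)
| FTop : concept -> formula                 (* (C = T) *)
| FNot : formula -> formula
| FAnd : formula -> formula -> formula.

Record interp : Type := {
  dom : Type;
  dom_countable : exists g : dom -> nat, forall x y, g x = g y -> x = y;
  dom_pt : dom;
  cI : nat -> dom -> Prop;
  rI : nat -> dom -> dom -> Prop;
  iI : nat -> dom
}.

Fixpoint csat (I : interp) (C : concept) (x : dom I) : Prop :=
  match C with
  | CName A => cI I A x
  | CNot D => ~ csat I D x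
  | CAnd D E => csat I D x /\ csat I E x
  | CEx r D => exists y, rI I r x y /\ csat I D y
  end.

Fixpoint fsat (I : interp) (phi : formula) : Prop :=
  match phi with
  | FCA C a => csat I C (iI I a)
  | FRole r a b => rI I r (iI I a) (iI I b)
  | FTop C => forall x, csat I C x
  | FNot psi => ~ fsat I psi
  | FAnd p q => fsat I p /\ fsat I q
  end.

Definition fequiv (phi psi : formula) : Prop := forall I, fsat I phi <-> fsat I psi.

Definition cneg (C : concept) : concept :=
  match C with CNot D => D | _ => CNot C end.
Definition fneg (p : formula) : formula :=
  match p with FNot q => q | _ => FNot p end.

(* normal form: all double negations removed (representatives of the
   equivalence classes modulo ~~psi = psi) *)
Fixpoint cnf (C : concept) : concept :=
  match C with
  | CName A => CName A
  | CNot D => cneg (cnf D)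
  | CAnd D E => CAnd (cnf D) (cnf E)
  | CEx r D => CEx r (cnf D)
  end.
Fixpoint fnf (p : formula) : formula :=
  match p with
  | FCA C a => FCA (cnf C) a
  | FRole r a b => FRole r a b
  | FTop C => FTop (cnf C)
  | FNot q => fneg (fnf q)
  | FAnd q q' => FAnd (fnf q) (fnf q')
  end.

Fixpoint sub (p : formula) : list formula :=
  match p with
  | FNot q => sub q
  | FAnd q q' => [p; FNot p] ++ sub q ++ sub q'
  | _ => [p; FNot p]
  end.
Definition Sub (phi : formula) : list formula := sub (fnf phi).

Fixpoint ind (p : formula) : list nat :=
  match p with
  | FCA _ a => [a]
  | FRole _ a b => [a; b]
  | FTop _ => []
  | FNot q => ind q
  | FAnd q q' => ind q ++ ind q'
  end.

Inductive con (phi : formula) : concept -> Prop :=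
| con_top C : In (FTop C) (Sub phi) -> con phi C
| con_ca C a : In (FCA C a) (Sub phi) -> con phi C
| con_andl C D : con phi (CAnd C D) -> con phi C
| con_andr C D : con phi (CAnd C D) -> con phi D
| con_ex r C : con phi (CEx r C) -> con phi C
| con_neg C : con phi C -> con phi (cneg C).

Definition cset := concept -> Prop.
Definition fset := formula -> Prop.

Definition concept_type (phi : formula) (c : cset) : Prop :=
  (forall D, c D -> con phi D) /\
  (forall D, con phi D -> (c D <-> ~ c (cneg D))) /\
  (forall D E, con phi (CAnd D E) -> (c (CAnd D E) <-> (c D /\ c E))).

Definition formula_type (phi : formula) (f : fset) : Prop :=
  (forall p, f p -> In p (Sub phi)) /\
  (forall p, In p (Sub phi) -> (f p <-> ~ f (fneg p))) /\
  (forall p q, In (FAnd p q) (Sub phi) -> (f (FAnd p q) <-> (f p /\ f q))).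

(* T : set of concept types, o : ind(phi) -> T (only its values on ind(phi)
   matter), f : formula type *)
Definition model_candidate (phi : formula) (T : cset -> Prop) (o : nat -> cset)
    (f : fset) : Prop :=
  (forall c, T c -> concept_type phi c) /\
  (forall a, In a (ind phi) -> T (o a)) /\
  formula_type phi f /\
  f (fnf phi) /\
  (forall C a, f (FCA C a) -> o a C) /\
  (forall r a b, f (FRole r a b) ->
     forall C, o a (CNot (CEx r C)) -> o b (cneg C)).

Definition quasimodel (phi : formula) (T : cset -> Prop) (o : nat -> cset)
    (f : fset) : Prop :=
  model_candidate phi T o f /\
  (forall c r D, T c -> c (CEx r D) ->
     exists c', T c' /\ c' D /\ (forall E, c (CNot (CEx r E)) -> c' (cneg E))) /\
  (forall c C, T c -> c (cneg C) -> ~ f (FTop C)) /\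
  (forall C, f (FNot (FTop C)) -> exists c, T c /\ ~ c C) /\
  (exists c, T c).

Definition fbot : formula := FAnd (FTop (CName 0)) (FNot (FTop (CName 0))).
Definition ftop : formula := FNot fbot.
Definition for_ (p q : formula) : formula := FNot (FAnd (FNot p) (FNot q)).

Fixpoint bigconj (l : list formula) : formula :=
  match l with
  | [] => ftop
  | [x] => x
  | x :: xs => FAnd x (bigconj xs)
  end.
Fixpoint bigdisj (l : list formula) : formula :=
  match l with
  | [] => fbot
  | [x] => x
  | x :: xs => for_ x (bigdisj xs)
  end.

Definition is_atomic (p : formula) : bool :=
  match p with FCA _ _ | FRole _ _ _ | FTop _ => true | _ => false end.
Definition is_literal (p : formula) : bool :=
  match p with FNot q => is_atomic q | q => is_atomic q end.

Fixpoint subseqs {A : Type} (l : list A) : list (list A) :=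
  match l with
  | [] => [[]]
  | x :: xs => let r := subseqs xs in map (cons x) r ++ r
  end.

Fixpoint pfilter {A : Type} (P : A -> Prop) (l : list A) : list A :=
  match l with
  | [] => []
  | x :: xs => if excluded_middle_informative (P x) then x :: pfilter P xs
               else pfilter P xs
  end.

(* The formula types f occurring in some quasimodel (T,o,f) of phi, each
   represented by a sublist of Sub(phi) with the same elements. *)
Definition qm_ftypes (phi : formula) : list (list formula) :=
  pfilter (fun l => exists T o, quasimodel phi T o (fun p => In p l))
          (subseqs (Sub phi)).

Definition disjunct (l : list formula) : formula := bigconj (filter is_literal l).

Definition dagger (phi : formula) : formula := bigdisj (map disjunct (qm_ftypes phi)).

(* A model I of phi determines a quasimodel: its concept types are the
   con(phi)-types realised by elements of I, and its formula type is the set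
   of formulae of Sub(phi) true in I, whose disjunct I satisfies.  Conversely,
   if I satisfies the disjunct of a formula type f of a quasimodel, then I
   agrees with f on every atom of Sub(phi); as f respects negation and
   conjunction, it agrees with I on all of Sub(phi), in particular on phi. *)

From Stdlib Require Import List Classical ClassicalEpsilon FunctionalExtensionality PropExtensionality.
Import ListNotations.

Lemma csat_cneg I C x : csat I (cneg C) x <-> ~ csat I C x.
Proof. destruct C; simpl; tauto. Qed.

Lemma csat_cnf I C x : csat I (cnf C) x <-> csat I C x.
Proof.
  revert x; induction C as [A|C IHC|C IHC D IHD|r C IHC]; intro x; simpl.
  - tauto.
  - rewrite csat_cneg, IHC; tauto.
  - rewrite IHC, IHD; tauto.
  - split; intros [y [Hr HC]]; exists y; split; trivial; apply IHC; trivial.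
Qed.

Lemma fsat_fneg I p : fsat I (fneg p) <-> ~ fsat I p.
Proof. destruct p; simpl; tauto. Qed.

Lemma fsat_fnf I p : fsat I (fnf p) <-> fsat I p.
Proof.
  induction p as [C a|r a b|C|p IHp|p IHp q IHq]; simpl.
  - apply csat_cnf.
  - tauto.
  - split; intros H x; apply csat_cnf; trivial.
  - rewrite fsat_fneg, IHp; tauto.
  - rewrite IHp, IHq; tauto.
Qed.

Lemma fsat_bigconj I l : fsat I (bigconj l) <-> (forall p, In p l -> fsat I p).
Proof.
  induction l as [|p [|q l] IH].
  - simpl; tauto.
  - simpl; split; [intros H ? [<-|[]]; exact H | auto].
  - change (fsat I (FAnd p (bigconj (q :: l))) <-> (forall x, In x (p :: q :: l) -> fsat I x)).
    simpl fsat at 1; rewrite IH; simpl; firstorder congruence.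
Qed.

Lemma fsat_bigdisj I l : fsat I (bigdisj l) <-> (exists p, In p l /\ fsat I p).
Proof.
  induction l as [|p [|q l] IH].
  - simpl; firstorder.
  - simpl; split; [eauto | intros [x [[<-|[]] H]]; exact H].
  - change (fsat I (for_ p (bigdisj (q :: l))) <-> (exists x, In x (p :: q :: l) /\ fsat I x)).
    unfold for_; simpl fsat at 1; rewrite IH; split.
    + intro H; apply NNPP; intro Hn; apply H; split.
      * intro Hp; apply Hn; exists p; simpl; auto.
      * intros [x [Hx Hs]]; apply Hn; exists x; simpl; auto.
    + intros [x [[<-|Hx] Hs]] [Hp Hl]; [tauto | apply Hl; eauto].
Qed.

Lemma In_pfilter {A} (P : A -> Prop) l x : In x (pfilter P l) <-> In x l /\ P x.
Proof.
  induction l as [|a l IH]; simpl; [tauto|].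
  destruct (excluded_middle_informative (P a)); simpl; rewrite IH;
    intuition (subst; tauto).
Qed.

Lemma pfilter_in_subseqs {A} (P : A -> Prop) l : In (pfilter P l) (subseqs l).
Proof.
  induction l as [|a l IH]; simpl; [auto|].
  destruct (excluded_middle_informative (P a)); apply in_or_app;
    [left; apply in_map | right]; trivial.
Qed.

(* Sub is only well behaved on representatives without double negations,
   such as [fnf phi]. *)
Definition not_neg (p : formula) : Prop :=
  match p with FNot _ => False | _ => True end.

Fixpoint dneg_free (p : formula) : Prop :=
  match p with
  | FNot q => not_neg q /\ dneg_free q
  | FAnd q q' => dneg_free q /\ dneg_free q'
  | _ => True
  end.

Lemma fneg_not_neg p : not_neg p -> fneg p = FNot p.
Proof. destruct p; simpl; tauto. Qed.

Lemma dneg_free_fneg p : dneg_free p -> dneg_free (fneg p).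
Proof. destruct p; simpl; tauto. Qed.

Lemma dneg_free_fnf p : dneg_free (fnf p).
Proof. induction p; simpl; auto using dneg_free_fneg. Qed.

Lemma in_sub_self p : dneg_free p -> In p (sub p).
Proof. destruct p as [| | |q|]; simpl; auto; destruct q; simpl; tauto. Qed.

Lemma sub_fneg q p : In p (sub q) -> In (fneg p) (sub q).
Proof.
  induction q; simpl; intro Hp; try (destruct Hp as [<-|[<-|[]]]; simpl; auto; fail).
  - auto.
  - destruct Hp as [<-|[<-|Hp]]; simpl; auto.
    right; right; apply in_or_app; apply in_app_or in Hp; intuition.
Qed.

Lemma incl_sub_sub q x : In x (sub q) -> incl (sub x) (sub q).
Proof.
  induction q; simpl; intro Hx; try (destruct Hx as [<-|[<-|[]]]; apply incl_refl).
  - auto.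
  - destruct Hx as [<-|[<-|Hx]]; try apply incl_refl.
    intros y Hy; right; right; apply in_or_app; apply in_app_or in Hx.
    destruct Hx; [left; eapply IHq1 | right; eapply IHq2]; eauto.
Qed.

Lemma dneg_free_sub q x : dneg_free q -> In x (sub q) -> dneg_free x.
Proof.
  induction q; simpl; intros Hq Hx; try (destruct Hx as [<-|[<-|[]]]; simpl; auto; fail).
  - tauto.
  - destruct Hx as [<-|[<-|Hx]]; simpl; auto.
    apply in_app_or in Hx; destruct Hx; [apply IHq1 | apply IHq2]; tauto.
Qed.

Lemma sub_FAnd q p p' : dneg_free q -> In (FAnd p p') (sub q) ->
  In p (sub q) /\ In p' (sub q).
Proof.
  intros Hq H; destruct (dneg_free_sub q _ Hq H) as [Hp Hp'].
  split; apply (incl_sub_sub q _ H); simpl; right; right; apply in_or_app;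
    auto using in_sub_self.
Qed.

Lemma con_not_ex phi r C : con phi (CNot (CEx r C)) -> con phi (cneg C).
Proof. intro H; apply con_neg, (con_ex phi r), (con_neg _ _ H). Qed.

Section InducedQuasimodel.

Variables (phi : formula) (I : interp).

Definition con_type (x : dom I) : cset := fun C => con phi C /\ csat I C x.

Definition realised_types : cset -> Prop := fun c => exists x, c = con_type x.

Definition true_ftype : fset := fun p => In p (Sub phi) /\ fsat I p.

Lemma concept_type_con_type x : concept_type phi (con_type x).
Proof.
  unfold con_type; split; [|split].
  - intros D [HD _]; exact HD.
  - intros D HD; pose proof (con_neg phi D HD); rewrite csat_cneg; tauto.
  - intros D E H; pose proof (con_andl _ _ _ H); pose proof (con_andr _ _ _ H).
    simpl; tauto.
Qed.

Lemma formula_type_true_ftype : formula_type phi true_ftype.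
Proof.
  unfold true_ftype; split; [|split].
  - tauto.
  - intros p Hp; pose proof (sub_fneg _ _ Hp); rewrite fsat_fneg; tauto.
  - intros p q H; pose proof (sub_FAnd _ _ _ (dneg_free_fnf phi) H); simpl; tauto.
Qed.

Lemma model_candidate_of_model : fsat I phi ->
  model_candidate phi realised_types (fun a => con_type (iI I a)) true_ftype.
Proof.
  intro Hphi; split; [|split; [|split; [|split; [|split]]]].
  - intros c [x ->]; apply concept_type_con_type.
  - intros a _; eexists; reflexivity.
  - apply formula_type_true_ftype.
  - split; [apply in_sub_self, dneg_free_fnf | apply fsat_fnf, Hphi].
  - intros C a [HS Hs]; exact (conj (con_ca phi C a HS) Hs).
  - intros r a b [_ Hr] C [HC Hn]; split; [exact (con_not_ex _ _ _ HC)|].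
    rewrite csat_cneg; intro Hb; apply Hn; exists (iI I b); simpl in Hr; auto.
Qed.

Lemma quasimodel_of_model : fsat I phi ->
  quasimodel phi realised_types (fun a => con_type (iI I a)) true_ftype.
Proof.
  intro Hphi; split; [apply model_candidate_of_model, Hphi | split; [|split; [|split]]].
  - intros c r D [x ->] [HrD [y [Hr HD]]].
    exists (con_type y); split; [eexists; reflexivity|]; split.
    + exact (conj (con_ex phi r D HrD) HD).
    + intros E [HE Hn]; split; [exact (con_not_ex _ _ _ HE)|].
      rewrite csat_cneg; intro Hy; apply Hn; exists y; auto.
  - intros c C [x ->] [_ Hs] [_ Ht]; rewrite csat_cneg in Hs; exact (Hs (Ht x)).
  - intros C [_ Hs]; apply not_all_ex_not in Hs; destruct Hs as [x Hx].
    exists (con_type x); split; [eexists; reflexivity | unfold con_type; tauto].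
  - exists (con_type (dom_pt I)); eexists; reflexivity.
Qed.

Definition true_ftype_list : list formula := pfilter (fsat I) (Sub phi).

Lemma true_ftype_listE : (fun p => In p true_ftype_list) = true_ftype.
Proof.
  apply functional_extensionality; intro p; apply propositional_extensionality.
  apply In_pfilter.
Qed.

Lemma true_ftype_list_in_qm_ftypes : fsat I phi -> In true_ftype_list (qm_ftypes phi).
Proof.
  intro Hphi; apply In_pfilter; split; [apply pfilter_in_subseqs|].
  exists realised_types, (fun a => con_type (iI I a)).
  rewrite true_ftype_listE; apply quasimodel_of_model, Hphi.
Qed.

Lemma fsat_disjunct_true_ftype_list : fsat I (disjunct true_ftype_list).
Proof.
  apply fsat_bigconj; intros p Hp; apply filter_In in Hp.
  apply (In_pfilter (fsat I) (Sub phi) p), Hp.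
Qed.

End InducedQuasimodel.

Section FormulaTypeAgreement.

Variables (phi : formula) (I : interp) (l : list formula).
Hypothesis l_ftype : formula_type phi (fun p => In p l).
Hypothesis l_literals_true : forall p, In p l -> is_literal p = true -> fsat I p.

Lemma ftype_atomicE p : is_atomic p = true -> In p (Sub phi) -> (In p l <-> fsat I p).
Proof.
  intros Ha Hp; assert (Hnn : not_neg p) by (destruct p; simpl in *; auto; discriminate).
  split.
  - intro H; apply l_literals_true; [exact H | destruct p; simpl in *; congruence].
  - intro Hs; apply NNPP; intro Hn.
    assert (HN : In (FNot p) l).
    { rewrite <- fneg_not_neg by exact Hnn.
      apply NNPP; intro H; apply Hn, (proj1 (proj2 l_ftype) p Hp), H. }
    exact (l_literals_true _ HN Ha Hs).
Qed.

Lemma ftypeE p : dneg_free p -> incl (sub p) (Sub phi) -> (In p l <-> fsat I p).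
Proof.
  destruct l_ftype as [_ [Hneg Hand]].
  induction p as [C a|r a b|C|p IHp|p IHp q IHq]; intros Hp Hsub.
  1-3: apply ftype_atomicE; [reflexivity | apply Hsub; simpl; auto].
  - destruct Hp as [Hnn Hp]; simpl in Hsub.
    specialize (Hneg p (Hsub p (in_sub_self p Hp))); rewrite fneg_not_neg in Hneg by exact Hnn.
    simpl; rewrite <- (IHp Hp Hsub); tauto.
  - destruct Hp as [Hp Hq].
    assert (Hsubp : incl (sub p) (Sub phi)) by
      (intros y Hy; apply Hsub; simpl; right; right; apply in_or_app; auto).
    assert (Hsubq : incl (sub q) (Sub phi)) by
      (intros y Hy; apply Hsub; simpl; right; right; apply in_or_app; auto).
    rewrite (Hand p q (Hsub _ (or_introl eq_refl))), IHp, IHq by assumption.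
    reflexivity.
Qed.

End FormulaTypeAgreement.

Lemma fsat_of_qm_ftype phi l I :
  In l (qm_ftypes phi) -> fsat I (disjunct l) -> fsat I phi.
Proof.
  intros Hl Hd; apply In_pfilter in Hl; destruct Hl as [_ [T [o Hq]]].
  destruct Hq as [[_ [_ [Hft [Hphi _]]]] _].
  apply fsat_fnf, (ftypeE phi I l Hft); [| apply dneg_free_fnf | apply incl_refl | exact Hphi].
  intros p Hp Hlit; apply (proj1 (fsat_bigconj I _) Hd), filter_In; auto.
Qed.

Theorem mainTheorem3 : forall phi : formula, fequiv phi (dagger phi).
Proof.
  intros phi I; unfold dagger; rewrite fsat_bigdisj; split.
  - intro Hphi; exists (disjunct (true_ftype_list phi I)); split.
    + apply in_map, true_ftype_list_in_qm_ftypes, Hphi.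
    + apply fsat_disjunct_true_ftype_list.
  - intros [d [Hd Hs]]; apply in_map_iff in Hd; destruct Hd as [l [<- Hl]].
    exact (fsat_of_qm_ftype phi l I Hl Hs).
Qed.
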